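(* Let $\alpha_1,\alpha_2\ge0$ with $\alpha_1+\alpha_2=1$ and $\alpha_2\ge\alpha_1$. Consider problem (P3): maximize $r$ over $(r,r_1,r_2,x,p_1,p_2)$ with $x\in\mathbb{R}$, subject to $r_k\ge\alpha_kr$ for $k=1,2$, $(r_1,r_2)\in\mathcal{C}_{\rm MAC}(x,p_1,p_2)$, $p_1+p_2\le\bar P$, $p_1,p_2\ge0$. Then there always exists an optimal UAV hovering location $x^*$ for (P3) with $0\le x^*\le D/2$.
   Context: Fix $D>0$, $H>0$, $\beta_0>0$, $\bar P>0$. Ground users GU 1, GU 2 are at horizontal positions $x_1=-D/2$, $x_2=D/2$; for a fixed UAV horizontal position $x$ (altitude $H$), $h_k(x)=\beta_0/((x-x_k)^2+H^2)$. For $p_1,p_2\ge0$, $\mathcal{C}_{\rm MAC}(x,p_1,p_2)$ is the set of $(r_1,r_2)$ with $r_1,r_2\ge0$, $r_1\le\log_2(1+p_1h_1(x))$, $r_2\le\log_2(1+p_2h_2(x))$, $r_1+r_2\le\log_2(1+p_1h_1(x)+p_2h_2(x))$. *)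

From Stdlib Require Import Reals.
Open Scope R_scope.

Definition log2 (y : R) : R := ln y / ln 2.

(* Channel power gain from UAV at horizontal position x (altitude H) to the
   ground user located at horizontal position xk. *)
Definition gain (beta0 H xk x : R) : R := beta0 / ((x - xk) ^ 2 + H ^ 2).

Definition h1 (D H beta0 x : R) : R := gain beta0 H (- D / 2) x.
Definition h2 (D H beta0 x : R) : R := gain beta0 H (D / 2) x.

Definition C_MAC (D H beta0 x p1 p2 r1 r2 : R) : Prop :=
  0 <= r1 /\ 0 <= r2 /\
  r1 <= log2 (1 + p1 * h1 D H beta0 x) /\
  r2 <= log2 (1 + p2 * h2 D H beta0 x) /\
  r1 + r2 <= log2 (1 + p1 * h1 D H beta0 x + p2 * h2 D H beta0 x).

Definition P3_feasible (D H beta0 Pbar a1 a2 : R) (r r1 r2 x p1 p2 : R) : Prop :=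
  r1 >= a1 * r /\ r2 >= a2 * r /\
  C_MAC D H beta0 x p1 p2 r1 r2 /\
  p1 + p2 <= Pbar /\ 0 <= p1 /\ 0 <= p2.

Definition P3_optimal (D H beta0 Pbar a1 a2 : R) (r r1 r2 x p1 p2 : R) : Prop :=
  P3_feasible D H beta0 Pbar a1 a2 r r1 r2 x p1 p2 /\
  forall r' r1' r2' x' p1' p2',
    P3_feasible D H beta0 Pbar a1 a2 r' r1' r2' x' p1' p2' -> r' <= r.

From Stdlib Require Import Reals Lra Psatz Classical.
Open Scope R_scope.

(* With u = p1 h1 and v = p2 h2 the received SNRs, rates (r1, r2) with
   r1 <= r2 are supported only if u and v are both at least 2^r1 - 1 and
   u + v >= 2^(r1+r2) - 1.  Successive interference cancellation decoding
   user 2 first uses the SNRs (2^r1 - 1, 2^r1 (2^r2 - 1)), which therefore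
   cost no more transmit power than (u, v) at any location where user 2 is
   the nearer user, whichever way round (u, v) is assigned to the two
   distances.  Reflecting the UAV to x >= 0 and clamping it to [0, D/2] makes
   user 2 the nearer user without increasing the (possibly swapped) distances.
   So every feasible r of (P3) is achieved by SIC at some x in [0, D/2]; these
   r form a bounded set that is closed by compactness of [0, D/2], and its
   supremum is the optimum. *)

Lemma ln2_pos : 0 < ln 2.
Proof. pose proof ln_lt_2; lra. Qed.

Lemma log2_Rpower2 (t : R) : log2 (Rpower 2 t) = t.
Proof. unfold log2. rewrite ln_Rpower. field. pose proof ln2_pos; lra. Qed.

Lemma le_log2 (t y : R) : 0 < y -> t <= log2 y <-> Rpower 2 t <= y.
Proof.
  intros Hy.
  (* [log2 y] unfolds to [Rlog 2 y]. *)
  assert (Hlog : Rpower 2 (log2 y) = y) by (apply Rpower_Rlog; lra).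
  split.
  - intros Ht. rewrite <- Hlog. apply Rle_Rpower; lra.
  - intros Ht. apply Rnot_lt_le. intros Hlt.
    pose proof (Rpower_lt 2 _ _ ltac:(lra) Hlt). lra.
Qed.

Lemma Rpower2_ge1 (t : R) : 0 <= t -> 1 <= Rpower 2 t.
Proof. intros Ht. rewrite <- (Rpower_O 2) by lra. apply Rle_Rpower; lra. Qed.

Lemma continuity_pt_eps (f : R -> R) (m eps : R) :
  continuity_pt f m -> 0 < eps ->
  exists delta, 0 < delta /\ forall r, Rabs (r - m) < delta -> Rabs (f r - f m) < eps.
Proof.
  intros Hf Heps. destruct (Hf eps Heps) as [delta [Hdelta Hnear]].
  exists delta. split; [exact Hdelta|]. intros r Hr.
  destruct (Req_dec r m) as [->|Hne].
  - unfold Rminus. rewrite Rplus_opp_r, Rabs_R0. exact Heps.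
  - apply Hnear. split; [split; [exact I| congruence]| exact Hr].
Qed.

Lemma lincomb_equicontinuous (A B g h : R -> R) (P : R -> Prop) (K m : R) :
  continuity_pt A m -> continuity_pt B m ->
  (forall x, P x -> Rabs (g x) <= K /\ Rabs (h x) <= K) ->
  forall eps, 0 < eps -> exists delta, 0 < delta /\
    forall r x, Rabs (r - m) < delta -> P x ->
      Rabs (A r * g x + B r * h x - (A m * g x + B m * h x)) < eps.
Proof.
  intros HA HB Hbound eps Heps.
  (* [Rabs K + 1] rather than [K], which is negative when [P] is empty. *)
  set (eta := eps / (2 * (Rabs K + 1))).
  assert (Heta : 0 < eta) by (apply Rdiv_lt_0_compat; pose proof (Rabs_pos K); lra).
  destruct (continuity_pt_eps A m eta HA Heta) as [dA [HdA HnearA]].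
  destruct (continuity_pt_eps B m eta HB Heta) as [dB [HdB HnearB]].
  exists (Rmin dA dB). split; [apply Rmin_pos; assumption|].
  intros r x Hr Hx.
  pose proof (HnearA r ltac:(pose proof (Rmin_l dA dB); lra)) as Ha.
  pose proof (HnearB r ltac:(pose proof (Rmin_r dA dB); lra)) as Hb.
  destruct (Hbound x Hx) as [Hg Hh].
  pose proof (Rle_abs K). pose proof (Rabs_pos (g x)). pose proof (Rabs_pos (h x)).
  pose proof (Rabs_pos (A r - A m)). pose proof (Rabs_pos (B r - B m)).
  assert (Hsplit : 2 * (eta * (Rabs K + 1)) = eps)
    by (unfold eta; field; pose proof (Rabs_pos K); lra).
  replace (A r * g x + B r * h x - (A m * g x + B m * h x))
    with ((A r - A m) * g x + (B r - B m) * h x) by ring.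
  eapply Rle_lt_trans; [apply Rabs_triang|]. rewrite !Rabs_mult.
  nra.
Qed.

Lemma sublevel_projection_closed (f : R -> R -> R) (a b c m : R) :
  a <= b ->
  (forall x, a <= x <= b -> continuity_pt (f m) x) ->
  (forall eps, 0 < eps -> exists delta, 0 < delta /\
     forall r x, Rabs (r - m) < delta -> a <= x <= b -> Rabs (f r x - f m x) < eps) ->
  (forall delta, 0 < delta -> exists r x, Rabs (r - m) < delta /\ a <= x <= b /\ f r x <= c) ->
  exists x, a <= x <= b /\ f m x <= c.
Proof.
  intros Hab Hcont Hequi Happrox.
  destruct (continuity_ab_min (f m) a b Hab Hcont) as [xm [Hmin Hxm]].
  destruct (Rle_or_lt (f m xm) c) as [Hle|Hgt]; [exists xm; auto|].
  destruct (Hequi (f m xm - c) ltac:(lra)) as [delta [Hdelta Hnear]].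
  destruct (Happrox delta Hdelta) as [r [x [Hr [Hx Hfx]]]].
  pose proof (Hnear r x Hr Hx) as Hclose.
  pose proof (Hmin x Hx). apply Rabs_def2 in Hclose. lra.
Qed.

Lemma is_lub_approx (S : R -> Prop) (m delta : R) :
  is_lub S m -> 0 < delta -> exists r, S r /\ m - delta < r <= m.
Proof.
  intros [Hub Hleast] Hdelta. apply NNPP. intros Hnone.
  assert (Hub' : is_upper_bound S (m - delta)).
  { intros r Hr. apply Rnot_lt_le. intros Hlt. apply Hnone. exists r. auto. }
  pose proof (Hleast _ Hub'). lra.
Qed.

(* Received SNRs supporting rates (r1, r2) by successive interference
   cancellation: user 2 is decoded first with user 1 as noise, then user 1
   interference-free. *)
Definition sic_snr1 (r1 : R) : R := Rpower 2 r1 - 1.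
Definition sic_snr2 (r1 r2 : R) : R := Rpower 2 r1 * (Rpower 2 r2 - 1).

Lemma sic_snr_sum (r1 r2 : R) : 1 + sic_snr1 r1 + sic_snr2 r1 r2 = Rpower 2 (r1 + r2).
Proof. unfold sic_snr1, sic_snr2. rewrite Rpower_plus. ring. Qed.

Lemma sic_snr1_ge0 (r1 : R) : 0 <= r1 -> 0 <= sic_snr1 r1.
Proof. intros. unfold sic_snr1. pose proof (Rpower2_ge1 r1). lra. Qed.

Lemma sic_snr2_ge0 (r1 r2 : R) : 0 <= r1 -> 0 <= r2 -> 0 <= sic_snr2 r1 r2.
Proof.
  intros. unfold sic_snr2. pose proof (Rpower2_ge1 r1). pose proof (Rpower2_ge1 r2). nra.
Qed.

Lemma sic_snr_minimal (r1 r2 u v : R) :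
  r1 <= r2 -> Rpower 2 r1 <= 1 + u -> Rpower 2 r2 <= 1 + v ->
  Rpower 2 (r1 + r2) <= 1 + u + v ->
  sic_snr1 r1 <= u /\ sic_snr1 r1 <= v /\ sic_snr1 r1 + sic_snr2 r1 r2 <= u + v.
Proof.
  intros Hr Hu Hv Huv. pose proof (sic_snr_sum r1 r2).
  pose proof (Rle_Rpower 2 r1 r2 ltac:(lra) Hr). unfold sic_snr1 in *. repeat split; lra.
Qed.

Lemma weighted_sum_le (a b u v q1 q2 : R) :
  0 <= q2 <= q1 -> a <= u -> a + b <= u + v -> a * q1 + b * q2 <= u * q1 + v * q2.
Proof. intros. nra. Qed.

Definition sqdist (H xk x : R) : R := (x - xk) ^ 2 + H ^ 2.

Lemma sqdist_pos (H xk x : R) : 0 < H -> 0 < sqdist H xk x.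
Proof. intros. unfold sqdist. pose proof (pow2_ge_0 (x - xk)). simpl. nra. Qed.

Lemma gain_mul_sqdist (beta0 H xk x : R) : 0 < H -> gain beta0 H xk x * sqdist H xk x = beta0.
Proof.
  intros HH. pose proof (sqdist_pos H xk x HH). unfold gain, sqdist in *. field. lra.
Qed.

Lemma gain_pos (beta0 H xk x : R) : 0 < beta0 -> 0 < H -> 0 < gain beta0 H xk x.
Proof.
  intros Hb HH. pose proof (sqdist_pos H xk x HH). unfold gain, sqdist in *.
  apply Rdiv_lt_0_compat; assumption.
Qed.

Lemma sqdist_le_on_segment (D H x : R) : 0 <= x <= D / 2 ->
  sqdist H (- D / 2) x <= D ^ 2 + H ^ 2 /\ sqdist H (D / 2) x <= D ^ 2 + H ^ 2.
Proof. intros. unfold sqdist. split; nra. Qed.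

Lemma fold_into_segment (D H x : R) : 0 <= D -> exists y, 0 <= y <= D / 2 /\
  sqdist H (D / 2) y <= sqdist H (- D / 2) y /\
  ((sqdist H (- D / 2) y <= sqdist H (- D / 2) x /\ sqdist H (D / 2) y <= sqdist H (D / 2) x) \/
   (sqdist H (- D / 2) y <= sqdist H (D / 2) x /\ sqdist H (D / 2) y <= sqdist H (- D / 2) x)).
Proof.
  intros HD. exists (Rmin (Rabs x) (D / 2)). unfold sqdist, Rmin, Rabs.
  destruct (Rcase_abs x); destruct (Rle_dec _ (D / 2)); repeat split; nra.
Qed.

(* [beta0] times the total transmit power of that scheme at location x. *)
Definition sic_cost (D H r1 r2 x : R) : R :=
  sic_snr1 r1 * sqdist H (- D / 2) x + sic_snr2 r1 r2 * sqdist H (D / 2) x.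

Lemma C_MAC_sic (D H beta0 x r1 r2 : R) :
  0 < H -> 0 < beta0 -> 0 <= r1 -> 0 <= r2 ->
  C_MAC D H beta0 x (sic_snr1 r1 * sqdist H (- D / 2) x / beta0)
    (sic_snr2 r1 r2 * sqdist H (D / 2) x / beta0) r1 r2.
Proof.
  intros HH Hb Hr1 Hr2.
  assert (Hu : sic_snr1 r1 * sqdist H (- D / 2) x / beta0 * h1 D H beta0 x = sic_snr1 r1).
  { pose proof (sqdist_pos H (- D / 2) x HH). unfold h1, gain, sqdist in *. field. lra. }
  assert (Hv : sic_snr2 r1 r2 * sqdist H (D / 2) x / beta0 * h2 D H beta0 x = sic_snr2 r1 r2).
  { pose proof (sqdist_pos H (D / 2) x HH). unfold h2, gain, sqdist in *. field. lra. }
  unfold C_MAC. rewrite Hu, Hv, sic_snr_sum, log2_Rpower2.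
  pose proof (Rpower2_ge1 r1 Hr1). pose proof (Rpower2_ge1 r2 Hr2).
  repeat split; try lra.
  - unfold sic_snr1. replace (1 + (Rpower 2 r1 - 1)) with (Rpower 2 r1) by ring.
    rewrite log2_Rpower2. lra.
  - apply le_log2; unfold sic_snr2; nra.
Qed.

Lemma sic_cost_le_of_C_MAC (D H beta0 x p1 p2 r1 r2 : R) :
  0 < D -> 0 < H -> 0 < beta0 -> 0 <= p1 -> 0 <= p2 -> r1 <= r2 ->
  C_MAC D H beta0 x p1 p2 r1 r2 ->
  exists y, 0 <= y <= D / 2 /\ sic_cost D H r1 r2 y <= (p1 + p2) * beta0.
Proof.
  intros HD HH Hb Hp1 Hp2 Hr [_ [_ [C1 [C2 C12]]]].
  pose proof (gain_pos beta0 H (- D / 2) x Hb HH) as Hg1.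
  pose proof (gain_pos beta0 H (D / 2) x Hb HH) as Hg2.
  pose proof (gain_mul_sqdist beta0 H (- D / 2) x HH) as Hq1.
  pose proof (gain_mul_sqdist beta0 H (D / 2) x HH) as Hq2.
  unfold h1, h2 in *.
  set (u := p1 * gain beta0 H (- D / 2) x) in *.
  set (v := p2 * gain beta0 H (D / 2) x) in *.
  assert (Hu : 0 <= u) by (unfold u; nra).
  assert (Hv : 0 <= v) by (unfold v; nra).
  apply le_log2 in C1; [|lra]. apply le_log2 in C2; [|lra]. apply le_log2 in C12; [|lra].
  destruct (sic_snr_minimal r1 r2 u v Hr C1 C2 C12) as [Hmin1 [Hmin2 Hsum]].
  assert (Hpow : u * sqdist H (- D / 2) x + v * sqdist H (D / 2) x = (p1 + p2) * beta0).
  { transitivity (p1 * (gain beta0 H (- D / 2) x * sqdist H (- D / 2) x)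
                  + p2 * (gain beta0 H (D / 2) x * sqdist H (D / 2) x)).
    - unfold u, v. ring.
    - rewrite Hq1, Hq2. ring. }
  destruct (fold_into_segment D H x ltac:(lra)) as [y [Hy [Hnear Hcases]]].
  exists y. split; [exact Hy|]. unfold sic_cost.
  pose proof (sqdist_pos H (D / 2) y HH).
  destruct Hcases as [[E1 E2]|[E1 E2]].
  - pose proof (weighted_sum_le (sic_snr1 r1) (sic_snr2 r1 r2) u v
      (sqdist H (- D / 2) y) (sqdist H (D / 2) y) ltac:(lra) Hmin1 Hsum). nra.
  - pose proof (weighted_sum_le (sic_snr1 r1) (sic_snr2 r1 r2) v u
      (sqdist H (- D / 2) y) (sqdist H (D / 2) y) ltac:(lra) Hmin2 ltac:(lra)). nra.
Qed.

Definition achievable (D H beta0 Pbar a1 a2 r : R) : Prop :=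
  0 <= r /\ exists x, 0 <= x <= D / 2 /\ sic_cost D H (a1 * r) (a2 * r) x <= Pbar * beta0.

Lemma achievable_0 (D H beta0 Pbar a1 a2 : R) :
  0 <= D -> 0 <= Pbar * beta0 -> achievable D H beta0 Pbar a1 a2 0.
Proof.
  intros HD HP. split; [lra|]. exists 0. split; [lra|].
  unfold sic_cost, sic_snr1, sic_snr2. rewrite !Rmult_0_r, Rpower_O by lra. lra.
Qed.

Lemma achievable_bounded (D H beta0 Pbar a1 a2 : R) :
  0 < H -> 0 <= a1 -> 0 <= a2 -> a1 + a2 = 1 -> bound (achievable D H beta0 Pbar a1 a2).
Proof.
  intros HH Ha1 Ha2 Hs. pose proof ln2_pos.
  assert (HH2 : 0 < H ^ 2) by (simpl; nra).
  exists (Pbar * beta0 / (ln 2 * H ^ 2)). intros r [Hr [x [_ Hcost]]].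
  assert (Hq1 : H ^ 2 <= sqdist H (- D / 2) x)
    by (unfold sqdist; pose proof (pow2_ge_0 (x - - D / 2)); lra).
  assert (Hq2 : H ^ 2 <= sqdist H (D / 2) x)
    by (unfold sqdist; pose proof (pow2_ge_0 (x - D / 2)); lra).
  pose proof (sic_snr1_ge0 (a1 * r) ltac:(nra)).
  pose proof (sic_snr2_ge0 (a1 * r) (a2 * r) ltac:(nra) ltac:(nra)).
  pose proof (sic_snr_sum (a1 * r) (a2 * r)) as Hsum.
  replace (a1 * r + a2 * r) with r in Hsum by (rewrite <- Rmult_plus_distr_r, Hs; ring).
  pose proof (exp_ineq1_le (r * ln 2)) as Hexp. fold (Rpower 2 r) in Hexp.
  unfold sic_cost in Hcost.
  apply Rmult_le_reg_r with (ln 2 * H ^ 2); [nra|].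
  unfold Rdiv. rewrite Rmult_assoc, Rinv_l by nra. nra.
Qed.

Lemma achievable_lub (D H beta0 Pbar a1 a2 m : R) :
  0 < D -> 0 < H -> (exists r, achievable D H beta0 Pbar a1 a2 r) ->
  is_lub (achievable D H beta0 Pbar a1 a2) m -> achievable D H beta0 Pbar a1 a2 m.
Proof.
  intros HD HH [r0 Hr0] Hm.
  pose proof (proj1 Hm r0 Hr0). destruct Hr0 as [Hr0 _].
  split; [lra|].
  apply (sublevel_projection_closed (fun r x => sic_cost D H (a1 * r) (a2 * r) x)); [lra| | |].
  - intros x _. unfold sic_cost, sqdist. reg.
  - apply (lincomb_equicontinuous (fun r => sic_snr1 (a1 * r)) (fun r => sic_snr2 (a1 * r) (a2 * r))
      _ _ (fun x => 0 <= x <= D / 2) (D ^ 2 + H ^ 2)).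
    + unfold sic_snr1, Rpower. reg.
    + unfold sic_snr2, Rpower. reg.
    + intros x Hx. destruct (sqdist_le_on_segment D H x Hx).
      rewrite !Rabs_pos_eq by (apply Rlt_le, sqdist_pos; exact HH). split; assumption.
  - intros delta Hdelta.
    destruct (is_lub_approx _ m delta Hm Hdelta) as [r [[_ [x [Hx Hcost]]] Hr]].
    exists r, x. split; [rewrite Rabs_left1; lra|]. auto.
Qed.

Lemma P3_feasible_achievable (D H beta0 Pbar a1 a2 r r1 r2 x p1 p2 : R) :
  0 < D -> 0 < H -> 0 < beta0 -> 0 <= a1 <= a2 -> 0 <= r ->
  P3_feasible D H beta0 Pbar a1 a2 r r1 r2 x p1 p2 -> achievable D H beta0 Pbar a1 a2 r.
Proof.
  intros HD HH Hb Ha Hr [Hr1 [Hr2 [[H1 [H2 [C1 [C2 C12]]]] [HP [Hp1 Hp2]]]]].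
  assert (HC : C_MAC D H beta0 x p1 p2 (a1 * r) (a2 * r)) by (repeat split; nra).
  destruct (sic_cost_le_of_C_MAC D H beta0 x p1 p2 (a1 * r) (a2 * r) HD HH Hb Hp1 Hp2
              ltac:(nra) HC) as [y [Hy Hcost]].
  split; [exact Hr|]. exists y. split; [exact Hy|]. nra.
Qed.

Lemma achievable_P3_feasible (D H beta0 Pbar a1 a2 r x : R) :
  0 < H -> 0 < beta0 -> 0 <= a1 -> 0 <= a2 -> 0 <= r ->
  sic_cost D H (a1 * r) (a2 * r) x <= Pbar * beta0 ->
  P3_feasible D H beta0 Pbar a1 a2 r (a1 * r) (a2 * r) x
    (sic_snr1 (a1 * r) * sqdist H (- D / 2) x / beta0)
    (sic_snr2 (a1 * r) (a2 * r) * sqdist H (D / 2) x / beta0).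
Proof.
  intros HH Hb Ha1 Ha2 Hr Hcost.
  assert (Hr1 : 0 <= a1 * r) by nra. assert (Hr2 : 0 <= a2 * r) by nra.
  pose proof (sic_snr1_ge0 _ Hr1). pose proof (sic_snr2_ge0 _ _ Hr1 Hr2).
  pose proof (sqdist_pos H (- D / 2) x HH). pose proof (sqdist_pos H (D / 2) x HH).
  unfold sic_cost in Hcost.
  split; [lra|]. split; [lra|]. split; [apply C_MAC_sic; assumption|].
  repeat split.
  - apply Rmult_le_reg_r with beta0; [exact Hb|].
    replace ((_ / beta0 + _ / beta0) * beta0)
      with (sic_snr1 (a1 * r) * sqdist H (- D / 2) x + sic_snr2 (a1 * r) (a2 * r) * sqdist H (D / 2) x)
      by (field; lra).
    exact Hcost.
  - apply Rmult_le_pos; [nra|]. left. apply Rinv_0_lt_compat. exact Hb.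
  - apply Rmult_le_pos; [nra|]. left. apply Rinv_0_lt_compat. exact Hb.
Qed.

Theorem proposition2 (D H beta0 Pbar a1 a2 : R) :
  0 < D -> 0 < H -> 0 < beta0 -> 0 < Pbar ->
  0 <= a1 -> 0 <= a2 -> a1 + a2 = 1 -> a1 <= a2 ->
  exists r r1 r2 x p1 p2,
    P3_optimal D H beta0 Pbar a1 a2 r r1 r2 x p1 p2 /\
    0 <= x <= D / 2.
Proof.
  intros HD HH Hb HP Ha1 Ha2 Hs Hle.
  set (S := achievable D H beta0 Pbar a1 a2).
  assert (HS0 : S 0) by (apply achievable_0; nra).
  destruct (completeness S (achievable_bounded D H beta0 Pbar a1 a2 HH Ha1 Ha2 Hs)
              (ex_intro _ 0 HS0)) as [m Hm].
  destruct (achievable_lub D H beta0 Pbar a1 a2 m HD HH (ex_intro _ 0 HS0) Hm)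
    as [Hm0 [x [Hx Hcost]]].
  exists m, (a1 * m), (a2 * m), x,
    (sic_snr1 (a1 * m) * sqdist H (- D / 2) x / beta0),
    (sic_snr2 (a1 * m) (a2 * m) * sqdist H (D / 2) x / beta0).
  split; [split|exact Hx].
  - apply achievable_P3_feasible; assumption.
  - intros r r1 r2 y p1 p2 Hfeas.
    destruct (Rle_or_lt 0 r) as [Hr|Hr]; [|lra].
    apply Hm. exact (P3_feasible_achievable D H beta0 Pbar a1 a2 r r1 r2 y p1 p2
                       HD HH Hb (conj Ha1 Hle) Hr Hfeas).
Qed.
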